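(* In the setting described in the context, $f_{avg}(\pi^{io})\ge\mathbb{E}_{v\sim h}[f(\psi^c(v))]$.
   Context: Let $I=\{1,\dots,n\}$ be a set of items, $B$ a positive integer, $[B]=\{1,\dots,B\}$, $[0;B]=\{0,1,\dots,B\}$; for $u,w\in[0;B]^I$, $u\le w$ means coordinatewise. Let $f:[0;B]^I\to\mathbb{R}_{\ge0}$ be monotone ($u\le w\Rightarrow f(u)\le f(w)$) and lattice submodular ($f(u\vee s\mathbf{1}_i)-f(u)\ge f(w\vee s\mathbf{1}_i)-f(w)$ for all $u\le w$, $s\in[0;B]$, $i\in I$). Each item $i$ has a random state $\Phi(i)\in[B]$, independent across items, with known distribution $p_i(s)=\Pr[\Phi(i)=s]$; the state of an item is observed only after selecting it. Item $i$ in state $s$ has a nonnegative integer cost $c_i(s)$, with $c_i(s)\ge c_i(s')$ whenever $s\ge s'$. $C$ is a positive integer budget and $\mathcal{I}^{out}\subseteq 2^I$ is a downward-closed family. For $S\subseteq I$ and $\phi\in[B]^I$, $\phi_S$ equals $\phi(i)$ on $S$ and $0$ elsewhere; $\overline{f}(S)=\mathbb{E}[f(\Phi_S)]$, $F(\overline{x})=\sum_{U\subseteq I}\prod_{i\in U}\overline{x}(i)\prod_{i\notin U}(1-\overline{x}(i))\overline{f}(U)$, $P_{\mathcal{I}^{out}}=\mathrm{conv}\{\mathbf{1}_S: S\in\mathcal{I}^{out}\}$. For a policy $\pi$ (which sequentially selects items based on states observed so far), $I(\pi,\phi)$ is the set selected under realization $\phi$ and $f_{avg}(\pi)=\mathbb{E}[f(\Phi_{I(\pi,\Phi)})]$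 (expectation also over the policy's randomness). A monotone $(\beta,\gamma)$-balanced CRS for $\mathcal{I}^{out}$ is a (possibly randomized) scheme that, for any $\overline{z}\in\beta\cdot P_{\mathcal{I}^{out}}$ and the random set $R$ containing each $i$ independently with probability $\overline{z}(i)$, maps $R$ to $\chi(R)\subseteq R$ with $\chi(R)\in\mathcal{I}^{out}$, such that $\Pr[i\in\chi(R)\mid i\in R]\ge\gamma$ for all $i$, and for $i\in R\subseteq R'$, $\Pr[i\in\chi(R)]\ge\Pr[i\in\chi(R')]$. Assume such a scheme $\chi^{io}$ exists for given $\beta,\gamma\in[0,1]$. Problem P1: variables $x(i,t)\ge0$ for $i\in I$, $t\in\{1,\dots,C-c_i(B)\}$, $\overline{x}(i)=\sum_t x(i,t)$; maximize $F(\overline{x})$ subject to $\overline{x}(i)\le1$, $\overline{x}\in P_{\mathcal{I}^{out}}$, and for all $t\in\{1,\dots,C\}$: $\sum_{i\in I}\mathbb{E}[\min\{c_i(\Phi(i)),t\}]\sum_{t'=1}^{t}x(i,t')\le 2t$. Policy $\pi^{io}$: (1) compute a solution $y$ of P1 by the stochastic continuous greedy algorithm of Asadpour and Nazerzadeh (2016) with stopping time $l=\min\{\beta,1/4\}$ and step size $\delta=o(n^{-3})$; let $\overline{y}(i)=\sum_t y(i,t)$. (2) Form a random set $R^{io}$ containing each $i$ independently with probability $\overline{y}(i)$, and apply $\chi^{io}$ (with $\overline{z}=\overline{y}$) to obtain $\chi^{io}(R^{io})\in\mathcal{I}^{out}$. (3) For each $i\in\chi^{io}(R^{io})$ independently sample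 $t^{io}(i)\in\{1,\dots,C-c_i(B)\}$ with probability $y(i,t)/\overline{y}(i)$; sort $\chi^{io}(R^{io})$ in nondecreasing order of $t^{io}$ (ties broken by least index). Starting with $C'=0$, go through the items in this order: if $C'\le t^{io}(i)$, select $i$, observe $\Phi(i)$ and update $C'\leftarrow C'+c_i(\Phi(i))$; otherwise skip $i$. Distribution $h$: $v\in[0;B]^I$ has independent coordinates with $\Pr[v(i)=j]=p_i(j)\overline{y}(i)$ for $j\in[B]$ and $\Pr[v(i)=0]=1-\overline{y}(i)$; $R(v)=\{i:v(i)\ne0\}$. Mapping $\psi^a$: $\psi^a(v)(i)=v(i)$ if $i\in\chi^{io}(R(v))$, else $0$. Mapping $\psi^b$: for each $i\in R(v)$ independently sample $t(i)\in\{1,\dots,C-c_i(B)\}$ with $\Pr[t(i)=t]=y(i,t)/\overline{y}(i)$; $\psi^b(v)(i)=v(i)$ if $i\in R(v)$ and $\sum_{i'\in R(v)\setminus\{i\},\,t(i')\le t(i)}c_{i'}(v(i'))\le t(i)$, else $0$. Mapping $\psi^c$: apply $\psi^a$ and $\psi^b$ to $v$ independently and set $\psi^c(v)(i)=v(i)$ if $\psi^a(v)(i)=v(i)$ and $\psi^b(v)(i)=v(i)$, and $0$ otherwise. *)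

(* everything is finite, expectations are finite weighted sums. *)
From HB Require Import structures.
From mathcomp Require Import all_boot all_order all_algebra.
Set Implicit Arguments. Unset Strict Implicit. Unset Printing Implicit Defensive.
Import Order.TTheory GRing.Theory Num.Theory.
Local Open Scope ring_scope.

(* Items I = 'I_n ; [0;B] = 'I_B.+1 ; state 0 = "not selected" ; times in 'I_C.+1 *)
Definition vec (n B : nat) := {ffun 'I_n -> 'I_B.+1}.

Definition vle n B (u w : vec n B) := forall i, (u i <= w i)%N.

Definition join_at n B (u : vec n B) (i : 'I_n) (s : 'I_B.+1) : vec n B :=
  [ffun j => if j == i then (if (u i <= s)%N then s else u i) else u j].

Definition monotone_fun (R : realFieldType) n B (f : vec n B -> R) :=
  forall u w : vec n B, vle u w -> f u <= f w.

Definition lattice_submodular (R : realFieldType) n B (f : vec n B -> R) :=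
  forall (u w : vec n B), vle u w -> forall (s : 'I_B.+1) (i : 'I_n),
    f (join_at w i s) - f w <= f (join_at u i s) - f u.

Definition restrict n B (phi : vec n B) (S : {set 'I_n}) : vec n B :=
  [ffun i => if i \in S then phi i else ord0].

Definition downward_closed n (F : {set {set 'I_n}}) :=
  forall S T : {set 'I_n}, T \subset S -> S \in F -> T \in F.

Definition inP (R : realFieldType) n (F : {set {set 'I_n}}) (z : 'I_n -> R) :=
  exists lam : {set 'I_n} -> R,
    [/\ forall S, 0 <= lam S, \sum_(S : {set 'I_n}) lam S = 1,
        forall S, lam S != 0 -> S \in F
      & forall i, z i = \sum_(S : {set 'I_n} | i \in S) lam S].

Definition in_scaledP (R : realFieldType) n (beta : R) (F : {set {set 'I_n}})
  (z : 'I_n -> R) :=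
  exists x : 'I_n -> R, inP F x /\ forall i, z i = beta * x i.

(* Pr[R = Rs] when each i is in R independently with prob z i *)
Definition bern_set (R : realFieldType) n (z : 'I_n -> R) (Rs : {set 'I_n}) : R :=
  \prod_(i < n) (if i \in Rs then z i else 1 - z i).

(* Pr[i \in chi(Rs)] for a randomized scheme given as a kernel *)
Definition pr_in (R : realFieldType) n (K : {set 'I_n} -> {set 'I_n} -> R)
  (Rs : {set 'I_n}) (i : 'I_n) : R :=
  \sum_(S : {set 'I_n} | i \in S) K Rs S.

(* chi z Rs S = Pr[chi(Rs) = S] for the scheme applied with vector z *)
Definition monotone_balanced_CRS (R : realFieldType) n (beta gamma : R)
  (F : {set {set 'I_n}}) (chi : ('I_n -> R) -> {set 'I_n} -> {set 'I_n} -> R) :=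
  forall z : 'I_n -> R, in_scaledP beta F z ->
  [/\ forall Rs S, 0 <= chi z Rs S,
      forall Rs, \sum_(S : {set 'I_n}) chi z Rs S = 1,
      forall Rs S, chi z Rs S != 0 -> S \subset Rs /\ S \in F,
      (* Pr[i \in chi(R) | i \in R] >= gamma, written without division *)
      forall i, gamma * z i <=
         \sum_(Rs : {set 'I_n} | i \in Rs) bern_set z Rs * pr_in (chi z) Rs i
    & forall i (Rs Rs' : {set 'I_n}), i \in Rs -> Rs \subset Rs' ->
         pr_in (chi z) Rs' i <= pr_in (chi z) Rs i].

Definition ybar (R : realFieldType) n C (y : 'I_n -> 'I_C.+1 -> R) (i : 'I_n) : R :=
  \sum_(t : 'I_C.+1) y i t.

(* Pr[t = tt] where t(i) ~ y(i,.)/ybar(i) independently for i \in S,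
   and t(i) = 0 (dummy) for i \notin S *)
Definition time_w (R : realFieldType) n C (y : 'I_n -> 'I_C.+1 -> R)
  (S : {set 'I_n}) (tt : {ffun 'I_n -> 'I_C.+1}) : R :=
  \prod_(i < n) (if i \in S then y i (tt i) / ybar y i else (tt i == ord0)%:R).

Definition state_w (R : realFieldType) n B (p : 'I_n -> 'I_B.+1 -> R) (phi : vec n B) : R :=
  \prod_(i < n) p i (phi i).

Definition io_order n C (tt : {ffun 'I_n -> 'I_C.+1}) (S : {set 'I_n}) : seq 'I_n :=
  sort (fun i j : 'I_n => (tt i < tt j)%N || ((tt i == tt j) && (i <= j)%N)) (enum S).

Definition io_selected n B C (c : 'I_n -> 'I_B.+1 -> nat) (phi : vec n B)
  (tt : {ffun 'I_n -> 'I_C.+1}) (S : {set 'I_n}) : {set 'I_n} :=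
  (foldl (fun (st : nat * {set 'I_n}) (i : 'I_n) =>
            if (st.1 <= tt i)%N then (st.1 + c i (phi i), i |: st.2)%N else st)
         (0%N, set0) (io_order tt S)).2.

(* f_avg(pi^io) : expectation over Phi, R^io, chi^io, t^io *)
Definition favg_io (R : realFieldType) n B C (f : vec n B -> R)
  (p : 'I_n -> 'I_B.+1 -> R) (c : 'I_n -> 'I_B.+1 -> nat)
  (y : 'I_n -> 'I_C.+1 -> R)
  (chi : ('I_n -> R) -> {set 'I_n} -> {set 'I_n} -> R) : R :=
  \sum_(phi : vec n B) state_w p phi *
  \sum_(Rs : {set 'I_n}) bern_set (ybar y) Rs *
  \sum_(S : {set 'I_n}) chi (ybar y) Rs S *
  \sum_(tt : {ffun 'I_n -> 'I_C.+1}) time_w y S tt *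
     f (restrict phi (io_selected c phi tt S)).

Definition h_w (R : realFieldType) n B C (p : 'I_n -> 'I_B.+1 -> R)
  (y : 'I_n -> 'I_C.+1 -> R) (v : vec n B) : R :=
  \prod_(i < n) (if v i == ord0 then 1 - ybar y i else p i (v i) * ybar y i).

Definition Rv n B (v : vec n B) : {set 'I_n} := [set i | v i != ord0].

(* psi^a, given the sampled output S = chi(R(v)) *)
Definition psi_a n B (v : vec n B) (S : {set 'I_n}) : vec n B :=
  [ffun i => if i \in S then v i else ord0].

(* psi^b, given the sampled times tt *)
Definition psi_b n B C (c : 'I_n -> 'I_B.+1 -> nat) (v : vec n B)
  (tt : {ffun 'I_n -> 'I_C.+1}) : vec n B :=
  [ffun i => if (i \in Rv v) &&
      (\sum_(i' in Rv v | (i' != i) && (tt i' <= tt i)%N) c i' (v i') <= tt i)%N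
     then v i else ord0].

Definition psi_c n B C (c : 'I_n -> 'I_B.+1 -> nat) (v : vec n B)
  (S : {set 'I_n}) (tt : {ffun 'I_n -> 'I_C.+1}) : vec n B :=
  [ffun i => if (psi_a v S i == v i) && (psi_b c v tt i == v i) then v i else ord0].

(* E_{v ~ h}[ f(psi^c(v)) ] (psi^a and psi^b use independent randomness) *)
Definition Eh_psi_c (R : realFieldType) n B C (f : vec n B -> R)
  (p : 'I_n -> 'I_B.+1 -> R) (c : 'I_n -> 'I_B.+1 -> nat)
  (y : 'I_n -> 'I_C.+1 -> R)
  (chi : ('I_n -> R) -> {set 'I_n} -> {set 'I_n} -> R) : R :=
  \sum_(v : vec n B) h_w p y v *
  \sum_(S : {set 'I_n}) chi (ybar y) (Rv v) S *
  \sum_(tt : {ffun 'I_n -> 'I_C.+1}) time_w y (Rv v) tt *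
     f (psi_c c v S tt).

(* Couple the two experiments.  A vector v ~ h is the state vector Phi
   restricted to an independent Bernoulli(ybar) set R, so R(v) = R, and psi^a
   uses the same sample S = chi(R) as the policy.  psi^b draws times for all
   of R while the policy draws them only on S; restricting the former to S
   gives exactly the latter.  Under this coupling psi^c(v) <= Phi restricted
   to the items selected by pi^io: an item i kept by psi^b has total cost at
   most t(i) among the earlier items of R, and the policy's cost counter on
   reaching i only counts earlier items of S, a subset of R.  Monotonicity of
   f concludes. *)

From mathcomp Require Import all_boot all_order all_algebra.
From mathcomp Require Import zify.
Set Implicit Arguments. Unset Strict Implicit. Unset Printing Implicit Defensive.
Import Order.TTheory GRing.Theory Num.Theory.
Local Open Scope ring_scope.

Lemma sum_mul_eq_natr (R : pzSemiRingType) (T : finType) (F : T -> R) (a : T) :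
  \sum_(s : T) F s * (s == a)%:R = F a.
Proof.
rewrite (bigD1 a) //= eqxx mulr1 big1 ?addr0 // => s /negbTE ->.
by rewrite mulr0.
Qed.

Lemma natr_eq_ffun (R : comPzSemiRingType) (I : finType) (T : eqType)
    (u v : {ffun I -> T}) :
  ((u == v)%:R : R) = \prod_i ((u i == v i)%:R : R).
Proof.
have [->|/eqP neq] := eqVneq u v; first by rewrite big1 // => i _; rewrite eqxx.
have [i /negbTE uvi|uv] := pickP (fun i => u i != v i).
  by rewrite (bigD1 i) //= uvi mul0r.
by case: neq; apply/ffunP => i; apply/eqP/negbFE/uv.
Qed.

Lemma sum_pushforward (R : comPzSemiRingType) (I J : finType) (w : I -> R)
    (g : I -> J) (F : J -> R) :
  \sum_x w x * F (g x) = \sum_y F y * \sum_x w x * (g x == y)%:R.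
Proof.
transitivity (\sum_x \sum_y w x * (F y * (y == g x)%:R)).
  by apply: eq_bigr => x _; rewrite -big_distrr /= sum_mul_eq_natr.
rewrite exchange_big; apply: eq_bigr => y _; rewrite big_distrr.
by apply: eq_bigr => x _ /=; rewrite mulrCA eq_sym.
Qed.

Lemma sum_prod_ffun_pushforward (R : comPzSemiRingType) (I A T : finType)
    (w : I -> A -> R) (g : I -> A -> T) (b : {ffun I -> T}) :
  \sum_(a : {ffun I -> A}) \prod_i w i (a i) * ([ffun i => g i (a i)] == b)%:R =
  \prod_i \sum_(x : A) w i x * (g i x == b i)%:R.
Proof.
rewrite bigA_distr_bigA; apply: eq_bigr => a _.
by rewrite natr_eq_ffun -big_split; apply: eq_bigr => i _; rewrite ffunE.
Qed.

Lemma ler_wpM2l_nz (R : numDomainType) (x a b : R) :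
  0 <= x -> (x != 0 -> a <= b) -> x * a <= x * b.
Proof.
move=> x_ge0 le_ab; have [->|/le_ab] := eqVneq x 0; first by rewrite !mul0r.
exact: ler_wpM2l.
Qed.

Lemma state_w_ge0 (R : realFieldType) n B (p : 'I_n -> 'I_B.+1 -> R) phi :
  (forall i s, 0 <= p i s) -> 0 <= state_w p phi.
Proof. by move=> p_ge0; apply: prodr_ge0. Qed.

Lemma bern_set_ge0 (R : realFieldType) n (z : 'I_n -> R) Rs :
  (forall i, 0 <= z i <= 1) -> 0 <= bern_set z Rs.
Proof.
move=> z01; apply: prodr_ge0 => i _.
by have /andP[z_ge0 z_le1] := z01 i; case: ifP; rewrite ?subr_ge0.
Qed.

Lemma time_w_ge0 (R : realFieldType) n C (y : 'I_n -> 'I_C.+1 -> R) S tt :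
  (forall i t, 0 <= y i t) -> 0 <= time_w y S tt.
Proof.
move=> y_ge0; apply: prodr_ge0 => i _; case: ifP => // _.
by rewrite divr_ge0 ?sumr_ge0.
Qed.

Lemma state_w_neq0 (R : realFieldType) n B (p : 'I_n -> 'I_B.+1 -> R) phi :
  (forall i, p i ord0 = 0) -> state_w p phi != 0 -> forall i, phi i != ord0.
Proof.
move=> p0 + i; apply: contraNneq => phi_i.
by rewrite /state_w (bigD1 i) //= phi_i p0 mul0r.
Qed.

Lemma bern_set_neq0 (R : realFieldType) n (z : 'I_n -> R) Rs :
  bern_set z Rs != 0 -> {in Rs, forall i, z i != 0}.
Proof.
move=> + i Ri; apply: contraNneq => z_i.
by rewrite /bern_set (bigD1 i) //= Ri z_i mul0r.
Qed.

Lemma h_w_coord (R : realFieldType) B (q : 'I_B.+1 -> R) (z : R) (a : 'I_B.+1) :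
  q ord0 = 0 -> \sum_s q s = 1 ->
  \sum_s q s * (z * (s == a)%:R + (1 - z) * (ord0 == a)%:R) =
  if a == ord0 then 1 - z else q a * z.
Proof.
move=> q0 q1; under eq_bigr do rewrite mulrDr !mulrA.
rewrite big_split /= sum_mul_eq_natr -!big_distrl /= q1 mul1r.
have [->|a0] := eqVneq a ord0; first by rewrite q0 mul0r add0r mulr1.
by rewrite mulr0 addr0.
Qed.

Lemma sum_h_w (R : realFieldType) n B C (p : 'I_n -> 'I_B.+1 -> R)
    (y : 'I_n -> 'I_C.+1 -> R) (F : vec n B -> R) :
  (forall i, p i ord0 = 0) -> (forall i, \sum_s p i s = 1) ->
  \sum_v h_w p y v * F v =
  \sum_phi state_w p phi * \sum_Rs bern_set (ybar y) Rs * F (restrict phi Rs).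
Proof.
move=> p0 p1; set z := ybar y.
pose w (x : vec n B * {set 'I_n}) := state_w p x.1 * bern_set z x.2.
transitivity (\sum_x w x * F (restrict x.1 x.2)); last first.
  rewrite -(pair_bigA _ (fun phi Rs => w (phi, Rs) * F (restrict phi Rs))) /=.
  apply: eq_bigr => phi _; rewrite big_distrr.
  by apply: eq_bigr => Rs _; rewrite /w /= mulrA.
rewrite [RHS](sum_pushforward w (fun x => restrict x.1 x.2)).
apply: eq_bigr => v _; rewrite mulrC; congr (_ * _).
pose K i (s : 'I_B.+1) := p i s * (z i * (s == v i)%:R + (1 - z i) * (ord0 == v i)%:R).
transitivity (\prod_i \sum_s K i s).
  by apply: eq_bigr => i _; rewrite h_w_coord.
rewrite bigA_distr_bigA.
rewrite -(pair_bigA _ (fun phi Rs => w (phi, Rs) * (restrict phi Rs == v)%:R)) /=.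
apply: eq_bigr => phi _; under eq_bigr do rewrite /K mulrDr.
rewrite bigA_distr; apply: eq_bigr => Rs _.
rewrite /w /state_w /bern_set natr_eq_ffun -!big_split /=.
by apply: eq_bigr => i _; rewrite ffunE; case: (i \in Rs); rewrite mulrA.
Qed.

Definition times_on n C (S : {set 'I_n}) (tt : {ffun 'I_n -> 'I_C.+1}) :
  {ffun 'I_n -> 'I_C.+1} := [ffun i => if i \in S then tt i else ord0].

Lemma time_w_times_on (R : realFieldType) n C (y : 'I_n -> 'I_C.+1 -> R)
    (Rs S : {set 'I_n}) (tt' : {ffun 'I_n -> 'I_C.+1}) :
  S \subset Rs -> {in Rs, forall i, ybar y i != 0} ->
  \sum_tt time_w y Rs tt * (times_on S tt == tt')%:R = time_w y S tt'.
Proof.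
move=> /subsetP sRs ybar_nz.
pose w i (t : 'I_C.+1) := if i \in Rs then y i t / ybar y i else (t == ord0)%:R.
pose g i (t : 'I_C.+1) := if i \in S then t else ord0.
rewrite (sum_prod_ffun_pushforward w g); apply: eq_bigr => i _; rewrite /g.
have [Si|S'i] := boolP (i \in S); first by rewrite sum_mul_eq_natr /w sRs.
have w_sum1 : \sum_t w i t = 1.
  rewrite /w; have [Ri|_] := boolP (i \in Rs).
    by rewrite -big_distrl /= divff ?ybar_nz.
  by rewrite (bigD1 ord0) //= big1 ?addr0 // => t /negbTE ->.
by rewrite -big_distrl /= w_sum1 mul1r eq_sym.
Qed.

Section IoPolicy.
Variables (n B C : nat) (c : 'I_n -> 'I_B.+1 -> nat) (phi : vec n B)
  (tt : {ffun 'I_n -> 'I_C.+1}).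

Definition io_step (st : nat * {set 'I_n}) (i : 'I_n) :=
  if (st.1 <= tt i)%N then (st.1 + c i (phi i), i |: st.2)%N else st.

Lemma io_selectedE (S : {set 'I_n}) :
  io_selected c phi tt S = (foldl io_step (0%N, set0) (io_order tt S)).2.
Proof. by []. Qed.

Lemma io_fold_mono (l : seq 'I_n) (st : nat * {set 'I_n}) i :
  i \in st.2 -> i \in (foldl io_step st l).2.
Proof.
elim: l st => [|x l IHl] st //= st_i; apply: IHl.
by rewrite /io_step; case: ifP => //= _; rewrite !inE st_i orbT.
Qed.

Lemma io_fold_budget (l : seq 'I_n) (st : nat * {set 'I_n}) :
  ((foldl io_step st l).1 <= st.1 + \sum_(x <- l) c x (phi x))%N.
Proof.
elim: l st => [|x l IHl] st /=; first by rewrite big_nil addn0.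
rewrite big_cons; apply: leq_trans (IHl _) _.
by rewrite /io_step; case: ifP => _ /=; lia.
Qed.

Lemma io_order_prefix (S : {set 'I_n}) i : i \in S ->
  exists s1 s2, [/\ io_order tt S = s1 ++ i :: s2, uniq s1 &
    {in s1, forall j, [&& j \in S, j != i & (tt j <= tt i)%N]}].
Proof.
move=> Si; rewrite /io_order.
set r := (fun i j : 'I_n => _).
have r_trans : transitive r by move=> a b d; rewrite /r -!val_eqE /=; lia.
have r_total : total r by move=> a b; rewrite /r -!val_eqE /=; lia.
have := sort_sorted r_total (enum S); rewrite sorted_pairwise //.
have := sort_uniq r (enum S); rewrite enum_uniq.
have : {subset sort r (enum S) <= S} by move=> x; rewrite mem_sort mem_enum.
have : i \in sort r (enum S) by rewrite mem_sort mem_enum.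
case/splitPr=> s1 s2 sub_S; rewrite cat_uniq pairwise_cat => /and3P[uniq_s1 s1'i _].
case/and3P=> /allrelP s1_r _ _; exists s1, s2; split=> // j s1j /=.
rewrite sub_S ?mem_cat ?s1j //=; apply/andP; split.
  by apply: contraNneq s1'i => <-; rewrite /= s1j.
by have /orP[/ltnW|/andP[/eqP-> _]] := s1_r j i s1j (mem_head _ _).
Qed.

Lemma mem_io_selected (S : {set 'I_n}) i : i \in S ->
  (\sum_(j < n | [&& j \in S, j != i & tt j <= tt i]) c j (phi j) <= tt i)%N ->
  i \in io_selected c phi tt S.
Proof.
move=> Si budget; rewrite io_selectedE.
have [s1 [s2 [-> uniq_s1 sub_s1]]] := io_order_prefix Si.
rewrite foldl_cat /=; set st := foldl _ _ s1.
suff st_i : (st.1 <= tt i)%N.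
  by apply: io_fold_mono; rewrite /io_step st_i !inE eqxx.
apply: leq_trans (io_fold_budget s1 (0%N, set0)) _; rewrite add0n.
apply: leq_trans budget; rewrite big_uniq //= big_mkcond [leqRHS]big_mkcond /=.
by apply: leq_sum => j _; case: ifP => // /sub_s1 ->.
Qed.

End IoPolicy.

Lemma Rv_restrict n B (phi : vec n B) (Rs : {set 'I_n}) :
  (forall i, phi i != ord0) -> Rv (restrict phi Rs) = Rs.
Proof.
move=> phi_nz; apply/setP => i; rewrite !inE ffunE.
by case: ifP => _; rewrite ?phi_nz ?eqxx.
Qed.

Lemma psi_c_le_io_selected n B C (c : 'I_n -> 'I_B.+1 -> nat) (phi : vec n B)
    (Rs S : {set 'I_n}) (tt : {ffun 'I_n -> 'I_C.+1}) :
  (forall i, phi i != ord0) -> S \subset Rs ->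
  vle (psi_c c (restrict phi Rs) S tt)
      (restrict phi (io_selected c phi (times_on S tt) S)).
Proof.
move=> phi_nz /subsetP sRs i; rewrite /psi_c ffunE.
case: ifP => [/andP[/eqP psi_a_i /eqP psi_b_i]|_] //.
set v := restrict phi Rs in psi_a_i psi_b_i *.
have [-> //|v_nz] := eqVneq (v i) ord0.
have Si : i \in S.
  by move: psi_a_i v_nz; rewrite ffunE; case: ifP => // _ <-; rewrite eqxx.
have vE j : j \in Rs -> v j = phi j by move=> Rj; rewrite ffunE Rj.
suff budget : (\sum_(j < n | [&& j \in S, j != i & times_on S tt j <= times_on S tt i])
                 c j (phi j) <= times_on S tt i)%N.
  by rewrite vE ?sRs // ffunE (mem_io_selected Si budget).
move: psi_b_i v_nz; rewrite ffunE Rv_restrict //.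
case: ifP => [/andP[_ b_i] _ _|_ <-]; last by rewrite eqxx.
rewrite ffunE Si; apply: leq_trans b_i; rewrite big_mkcond [leqRHS]big_mkcond.
apply: leq_sum => j _; rewrite ffunE; case: (boolP (j \in S)) => //= Sj.
by rewrite sRs // vE ?sRs.
Qed.

Lemma sum_time_w_psi_c_le (R : realFieldType) n B C (f : vec n B -> R)
    (c : 'I_n -> 'I_B.+1 -> nat) (y : 'I_n -> 'I_C.+1 -> R) (phi : vec n B)
    (Rs S : {set 'I_n}) :
  monotone_fun f -> (forall i t, 0 <= y i t) -> (forall i, phi i != ord0) ->
  S \subset Rs -> {in Rs, forall i, ybar y i != 0} ->
  \sum_tt time_w y Rs tt * f (psi_c c (restrict phi Rs) S tt) <=
  \sum_tt time_w y S tt * f (restrict phi (io_selected c phi tt S)).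
Proof.
move=> f_mono y_ge0 phi_nz sRs ybar_nz.
pose G (tt : {ffun 'I_n -> 'I_C.+1}) := f (restrict phi (io_selected c phi tt S)).
suff -> : \sum_tt time_w y S tt * G tt = \sum_tt time_w y Rs tt * G (times_on S tt).
  apply: ler_sum => tt _; rewrite ler_wpM2l ?time_w_ge0 //.
  exact/f_mono/psi_c_le_io_selected.
rewrite (sum_pushforward _ (times_on S)); apply: eq_bigr => tt _.
by rewrite time_w_times_on // mulrC.
Qed.

Theorem lemma7 (R : realFieldType) (n B C : nat) (f : vec n B -> R)
  (p : 'I_n -> 'I_B.+1 -> R) (c : 'I_n -> 'I_B.+1 -> nat)
  (Iout : {set {set 'I_n}}) (beta gamma : R)
  (chi : ('I_n -> R) -> {set 'I_n} -> {set 'I_n} -> R)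
  (y : 'I_n -> 'I_C.+1 -> R) :
  (0 < B)%N -> (0 < C)%N ->
  (forall u, 0 <= f u) -> monotone_fun f -> lattice_submodular f ->
  (forall i s, 0 <= p i s) -> (forall i, p i ord0 = 0) ->
  (forall i, \sum_(s : 'I_B.+1) p i s = 1) ->
  (forall i (s s' : 'I_B.+1), (0 < s')%N -> (s' <= s)%N -> (c i s' <= c i s)%N) ->
  downward_closed Iout ->
  0 <= beta <= 1 -> 0 <= gamma <= 1 ->
  monotone_balanced_CRS beta gamma Iout chi ->
  (* y is the solution returned in step (1): a feasible point of P1 ... *)
  (forall i t, 0 <= y i t) ->
  (forall i (t : 'I_C.+1), y i t != 0 -> (1 <= t)%N && (t <= C - c i ord_max)%N) ->
  (forall i, ybar y i <= 1) ->
  inP Iout (ybar y) ->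
  (forall t : nat, (1 <= t <= C)%N ->
     \sum_(i < n) (\sum_(s : 'I_B.+1) p i s * (minn (c i s) t)%:R) *
        (\sum_(t' : 'I_C.+1 | (t' <= t)%N) y i t') <= 2 * t%:R) ->
  (* ... lying in beta * P_Iout, so that chi^io applies to ybar *)
  in_scaledP beta Iout (ybar y) ->
  Eh_psi_c f p c y chi <= favg_io f p c y chi.
Proof.
move=> _ _ _ f_mono _ p_ge0 p0 p1 _ _ _ _ crs y_ge0 _ ybar_le1 _ _ y_scaled.
have [chi_ge0 _ chi_sub _ _] := crs _ y_scaled.
have ybar01 i : 0 <= ybar y i <= 1 by rewrite ybar_le1 sumr_ge0.
rewrite /Eh_psi_c /favg_io sum_h_w //; apply: ler_sum => phi _.
apply: ler_wpM2l_nz; first exact: state_w_ge0.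
move=> /(state_w_neq0 p0) phi_nz; apply: ler_sum => Rs _.
apply: ler_wpM2l_nz; first exact: bern_set_ge0.
move=> /bern_set_neq0 ybar_nz; rewrite Rv_restrict //; apply: ler_sum => S _.
apply: ler_wpM2l_nz; first exact: chi_ge0.
move=> /(chi_sub Rs S) [sRs _]; exact: sum_time_w_psi_c_le.
Qed.
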